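(* Let $a$ be an odd positive integer and $b$ a positive integer. Then there are infinitely many practical numbers of the form $an+b$ with $n$ a nonnegative integer.
   Context: A positive integer $N$ is called a practical number if every integer in $[1,N]$ can be expressed as a sum of distinct positive divisors of $N$. *)

From mathcomp Require Import all_boot.
Set Implicit Arguments. Unset Strict Implicit. Unset Printing Implicit Defensive.

(* Distinct positive divisors of N are represented by a subsequence of the
   sorted duplicate-free list [divisors N]. *)
Definition practical (N : nat) : Prop :=
  0 < N /\
  forall m, 1 <= m <= N ->
    exists s : seq nat, subseq s (divisors N) /\ sumn s = m.

From mathcomp Require Import all_boot.
From mathcomp Require Import cyclic zify.
Set Implicit Arguments. Unset Strict Implicit. Unset Printing Implicit Defensive.

(* If [m] is odd and [1 < m <= 2^k], then [2^k m] is practical: a target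
   [x = q m + r] with [q <= 2^k] and [r < m <= 2^k] is the sum of the binary
   expansion of [q] scaled by [m] and the binary expansion of [r], and these
   two families of divisors [m 2^j] and [2^i] are disjoint because [m] is odd.
   Given odd [a] and [b > 0], pick an odd [m > 1] with [m = b (mod a)] and [k]
   a large multiple of [totient a]; then [2^k = 1 (mod a)] by Euler, so the
   practical number [2^k m] is congruent to [b] modulo [a]. *)

Lemma scaled_binary_expansion c k q : 0 < c -> q < 2 ^ k ->
  exists s : seq nat, [/\ uniq s,
    (forall x, x \in s -> exists2 j, j < k & x = c * 2 ^ j) & sumn s = c * q].
Proof.
move=> c_gt0; elim: k q => [|k IH] q.
  rewrite expn0 ltnS leqn0 => /eqP ->.
  by exists [::]; rewrite muln0.
move=> q_lt; have [q_small | q_large] := ltnP q (2 ^ k).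
  have [s [s_uniq s_pow s_sum]] := IH q q_small.
  exists s; split=> // x /s_pow [j j_lt ->].
  by exists j => //; apply: ltnW.
have q'_lt : q - 2 ^ k < 2 ^ k by rewrite expnS mul2n -addnn in q_lt; lia.
have [s [s_uniq s_pow s_sum]] := IH _ q'_lt.
exists (c * 2 ^ k :: s); split.
- rewrite /= s_uniq andbT; apply/negP => /s_pow [j j_lt /eqP].
  by rewrite eqn_pmul2l // eqn_exp2l // => /eqP j_eq; rewrite j_eq ltnn in j_lt.
- move=> x; rewrite inE => /orP [/eqP -> | /s_pow [j j_lt ->]]; first by exists k.
  by exists j => //; apply: ltnW.
- by rewrite /= s_sum -mulnDr subnKC.
Qed.

Lemma odd_mul_pow2_neq_pow2 m i j : odd m -> 1 < m -> m * 2 ^ j != 2 ^ i.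
Proof.
move=> m_odd m_gt1; apply/eqP => m_eq.
have m_dvd : m %| 2 ^ i by rewrite -m_eq dvdn_mulr.
have : coprime m (2 ^ i) by apply: coprimeXr; rewrite coprimen2.
by rewrite /coprime (gcdn_idPl m_dvd) => /eqP m1; rewrite m1 in m_gt1.
Qed.

Lemma uniq_sumn_subseq (t s : seq nat) : uniq t -> uniq s -> {subset s <= t} ->
  exists2 s', subseq s' t & sumn s' = sumn s.
Proof.
move=> t_uniq s_uniq st; exists [seq x <- t | x \in s]; first exact: filter_subseq.
apply: perm_sumn; apply: uniq_perm => [||x]; rewrite ?filter_uniq //.
by rewrite mem_filter andb_idr // => /st.
Qed.

Lemma practical_pow2_mul_odd m k : odd m -> 1 < m -> m <= 2 ^ k ->
  practical (2 ^ k * m).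
Proof.
move=> m_odd m_gt1 m_le; have m_gt0 : 0 < m by lia.
have pow_gt0 : 0 < 2 ^ k by rewrite expn_gt0.
have N_gt0 : 0 < 2 ^ k * m by rewrite muln_gt0 pow_gt0.
split=> // x /andP [_ x_le].
have q_lt : x %/ m < 2 ^ k.+1.
  apply: (@leq_ltn_trans (2 ^ k)); last by rewrite ltn_exp2l.
  by have := leq_div2r m x_le; rewrite mulnK.
have r_lt : x %% m < 2 ^ k.+1.
  by apply: leq_trans (ltn_pmod _ m_gt0) (leq_trans m_le _); rewrite leq_exp2l.
have [s1 [s1_uniq s1_pow s1_sum]] := scaled_binary_expansion m_gt0 q_lt.
have [s2 [s2_uniq s2_pow s2_sum]] := scaled_binary_expansion (ltn0Sn 0) r_lt.
have s_uniq : uniq (s1 ++ s2).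
  rewrite cat_uniq s1_uniq s2_uniq andbT /=; apply/hasPn => y /s2_pow [i _ ->].
  apply/negP => /s1_pow [j _ /eqP]; rewrite mul1n eq_sym.
  by apply/negP; apply: odd_mul_pow2_neq_pow2.
have s_div : {subset s1 ++ s2 <= divisors (2 ^ k * m)}.
  move=> y; rewrite mem_cat -dvdn_divisors //.
  case/orP => [/s1_pow [j j_lt ->] | /s2_pow [j j_lt ->]].
    by rewrite mulnC dvdn_pmul2r // dvdn_exp2l // -ltnS.
  by rewrite mul1n dvdn_mulr // dvdn_exp2l // -ltnS.
have [s s_sub s_sum] := uniq_sumn_subseq (divisors_uniq _) s_uniq s_div.
exists s; split=> //.
by rewrite s_sum sumn_cat s1_sum s2_sum mul1n mulnC -divn_eq.
Qed.

Lemma odd_congr_gt1 a b : odd a -> 0 < b ->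
  exists m, [/\ odd m, 1 < m, b <= m & m = b %[mod a]].
Proof.
move=> a_odd b_gt0; pose c := if odd b then 2 else 1.
exists (b + c * a); split.
- by rewrite /c oddD oddM; case: (odd b); rewrite /= ?a_odd.
- rewrite /c; case b_odd: (odd b); first by lia.
  have : b != 1 by apply: contraFneq b_odd => ->.
  by lia.
- exact: leq_addr.
- by rewrite addnC modnMDl.
Qed.

Lemma expn_totient_mul_mod p a n : coprime p a -> p ^ (totient a * n) = 1 %[mod a].
Proof.
by move=> cop; rewrite expnM -modnXm Euler_exp_totient // modnXm exp1n.
Qed.

Lemma eq_mod_add_mul a b N : b <= N -> N = b %[mod a] ->
  exists n, N = a * n + b.
Proof.
move=> b_le /eqP; rewrite eqn_mod_dvd // => /dvdnP [n N_eq].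
by exists n; rewrite mulnC -N_eq subnK.
Qed.

Theorem corollary2p3 (a b : nat) :
  odd a -> 0 < a -> 0 < b ->
  forall M : nat, exists N : nat,
    M < N /\ practical N /\ exists n : nat, N = a * n + b.
Proof.
move=> a_odd a_gt0 b_gt0 M.
have [m [m_odd m_gt1 b_le m_mod]] := odd_congr_gt1 a_odd b_gt0.
pose k := totient a * (m + M).
have k_big : m + M < 2 ^ k.
  apply: leq_trans (ltn_expl _ (ltnSn 1)) _.
  by rewrite leq_exp2l // leq_pmull // totient_gt0.
have pow_mod : 2 ^ k = 1 %[mod a] by rewrite expn_totient_mul_mod ?coprime2n.
have N_ge : m <= 2 ^ k * m by rewrite leq_pmull // expn_gt0.
exists (2 ^ k * m); split; last split.
- by have := leq_pmulr (2 ^ k) (ltnW m_gt1); lia.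
- by apply: practical_pow2_mul_odd; rewrite ?m_odd //; lia.
apply: eq_mod_add_mul; first exact: leq_trans b_le N_ge.
by rewrite -modnMml pow_mod modnMml mul1n m_mod.
Qed.
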